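(* Suppose the Low-Rank MDP satisfies $\eta$-feature coverage for some $\eta>0$: for all $h\in[H-1]$, $$\sup_{\pi\in\Pi_{\mathrm{M}}}\lambda_{\min}\big(\mathbb{E}^\pi[\phi^\star_h(x_h,a_h)\phi^\star_h(x_h,a_h)^\top]\big)\ge\eta.$$ Then the MDP satisfies $(\eta/2)^{3/2}$-reachability: for all $h\in\{2,\dots,H\}$ and $x\in\mathcal{X}_h$, $\sup_{\pi\in\Pi_{\mathrm{M}}}d^\pi(x)\ge(\eta/2)^{3/2}\|\mu^\star_h(x)\|$.
   Context: Setting (Low-Rank MDP). Fix horizon $H\in\mathbb{N}$, dimension $d\in\mathbb{N}$, a finite action set $\mathcal{A}$ with $|\mathcal{A}|=A$, and a measurable state space $\mathcal{X}=\mathcal{X}_1\sqcup\cdots\sqcup\mathcal{X}_H$ (disjoint layers) carrying a $\sigma$-finite measure $\nu$. The MDP $\mathcal{M}$ has an initial distribution $\rho$ on $\mathcal{X}_1$ and, for each $h\in[H-1]$, measurable maps $\phi^\star_h:\mathcal{X}_h\times\mathcal{A}\to\mathbb{R}^d$ and $\mu^\star_{h+1}:\mathcal{X}_{h+1}\to\mathbb{R}^d$ such that for every $(x,a)\in\mathcal{X}_h\times\mathcal{A}$ the function $x'\mapsto\mu^\star_{h+1}(x')^\top\phi^\star_h(x,a)$ is a probability density w.r.t. $\nu$ on $\mathcal{X}_{h+1}$; this density is the transition kernel $T_h(\cdot\mid x,a)$. $\Pi_{\mathrm{M}}$ denotes the set of randomized Markov policies $\pi:\mathcal{X}\to\Delta(\mathcal{A})$;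 an episode under $\pi$ draws $x_1\sim\rho$, $a_h\sim\pi(x_h)$, $x_{h+1}\sim T_h(\cdot\mid x_h,a_h)$, and $\mathbb{P}^\pi,\mathbb{E}^\pi$ denote the law and expectation of the trajectory. For $h\ge2$ and $x\in\mathcal{X}_h$, $d^\pi(x)$ denotes the density w.r.t. $\nu$ of the law of $x_h$ under $\pi$ (so $d^\pi(x)=\mu^\star_h(x)^\top\mathbb{E}^\pi[\phi^\star_{h-1}(x_{h-1},a_{h-1})]$). Normalization: $\|\phi^\star_h(x,a)\|\le 1$ for all $h,x,a$. Here $\|\cdot\|$ is the Euclidean norm and $\lambda_{\min}$ the smallest eigenvalue. *)

From HB Require Import structures.
From mathcomp Require Import all_boot all_order all_algebra.
From mathcomp Require Import all_classical all_reals all_analysis.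
Set Implicit Arguments. Unset Strict Implicit. Unset Printing Implicit Defensive.
Import Order.TTheory GRing.Theory Num.Theory.
Import numFieldNormedType.Exports.
Local Open Scope classical_set_scope.
Local Open Scope ring_scope.

Section LowRankMDP.
Context {R : realType} {dT : measure_display} {T : measurableType dT}
        {A : finType} {d : nat}.

Definition dotv (u v : 'rV[R]_d) : R := \sum_(i < d) u 0 i * v 0 i.
Definition enorm (u : 'rV[R]_d) : R := Num.sqrt (dotv u u).

Definition lambda_min (M : 'M[R]_d) : R := inf [set a : R | eigenvalue M a].

Definition is_policy (pi : T -> A -> R) : Prop :=
  [/\ forall x a, 0 <= pi x a,
      forall x, \sum_(a : A) pi x a = 1
    & forall a, measurable_fun setT (fun x => pi x a)].

Variables (rho : probability T R) (nu : {measure set T -> \bar R})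
          (X : nat -> set T)
          (mu : nat -> T -> 'rV[R]_d) (phi : nat -> T -> A -> 'rV[R]_d).

(* transition density T_h(x' | x, a) = mu_{h+1}(x')^T phi_h(x, a) *)
Definition trans (h : nat) (x : T) (a : A) (x' : T) : R :=
  dotv (mu h.+1 x') (phi h x a).

(* Eocc pi k g = E^pi[ g(x_{k+1}, a_{k+1}) ]  (layers are 1-based),
   computed by the Markov property (tower rule):
   E[g(x_1,a_1)] = int rho(dx) sum_a pi(a|x) g(x,a),
   E[g(x_{h+1},a_{h+1})] = E[ int_{X_{h+1}} T_h(x'|x_h,a_h) sum_a' pi(a'|x') g(x',a') nu(dx') ]. *)
Fixpoint Eocc (pi : T -> A -> R) (k : nat) (g : T -> A -> R) : R :=
  match k with
  | 0 => Rintegral rho (X 1) (fun x => \sum_(a : A) pi x a * g x a)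
  | k'.+1 => Eocc pi k' (fun x a =>
       Rintegral nu (X k'.+2)
         (fun x' => trans k'.+1 x a x' * \sum_(a' : A) pi x' a' * g x' a'))
  end.

Definition Expect (pi : T -> A -> R) (h : nat) (g : T -> A -> R) : R :=
  Eocc pi h.-1 g.

Definition covmat (pi : T -> A -> R) (h : nat) : 'M[R]_d :=
  \matrix_(i, j) Expect pi h (fun x a => phi h x a 0 i * phi h x a 0 j).

Definition featmean (pi : T -> A -> R) (h : nat) : 'rV[R]_d :=
  \row_i Expect pi h (fun x a => phi h x a 0 i).

Definition dpi (pi : T -> A -> R) (h : nat) (x : T) : R :=
  dotv (mu h x) (featmean pi h.-1).

End LowRankMDP.

From HB Require Import structures.
From mathcomp Require Import all_boot all_order all_algebra.
From mathcomp Require Import all_classical all_reals all_analysis.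
From mathcomp Require Import ring lra measurable_realfun.
Set Implicit Arguments. Unset Strict Implicit. Unset Printing Implicit Defensive.
Import Order.TTheory GRing.Theory Num.Theory.
Import numFieldNormedType.Exports.
Local Open Scope classical_set_scope.
Local Open Scope ring_scope.

(* Fix a policy and a state [x] in layer [h], and put [u = mu_h(x)] and
   [g = u^T phi_(h-1)(x_(h-1), a_(h-1))].  Then [d^pi(x) = E^pi[g]], and [0 <= g <= |u|] since
   [g] is a transition density and [|phi| <= 1].  Hence
     [lambda_min(Cov^pi) |u|^2 <= u^T Cov^pi u = E^pi[g^2] <= |u| E^pi[g] = |u| d^pi(x)],
   i.e. [d^pi(x) >= lambda_min(Cov^pi) |u|].  For [u <> 0] this also forces
   [lambda_min(Cov^pi) <= 1], so [eta <= 1] and [(eta/2)^(3/2) < eta]; a policy whose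
   [lambda_min] exceeds [(eta/2)^(3/2)] then witnesses the bound. *)

Section DotProduct.
Context {R : realType} {d : nat}.
Implicit Types (u v w : 'rV[R]_d).

Lemma dotvC u v : dotv u v = dotv v u.
Proof. by apply: eq_bigr => i _; rewrite mulrC. Qed.

Lemma dotvDr u v w : dotv u (v + w) = dotv u v + dotv u w.
Proof. by rewrite /dotv -big_split; apply: eq_bigr => i _; rewrite mxE mulrDr. Qed.

Lemma dotvDl u v w : dotv (v + w) u = dotv v u + dotv w u.
Proof. by rewrite dotvC dotvDr !(dotvC u). Qed.

Lemma dotvZr a u v : dotv u (a *: v) = a * dotv u v.
Proof. by rewrite /dotv mulr_sumr; apply: eq_bigr => i _; rewrite mxE mulrCA. Qed.

Lemma dotvZl a u v : dotv (a *: v) u = a * dotv v u.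
Proof. by rewrite dotvC dotvZr dotvC. Qed.

Lemma dotvBr u v w : dotv u (v - w) = dotv u v - dotv u w.
Proof. by rewrite dotvDr -scaleN1r dotvZr mulN1r. Qed.

Lemma dotvBl u v w : dotv (v - w) u = dotv v u - dotv w u.
Proof. by rewrite dotvC dotvBr !(dotvC u). Qed.

Lemma dotv0r u : dotv u 0 = 0.
Proof. by rewrite /dotv big1 // => i _; rewrite mxE mulr0. Qed.

Lemma dotv0l u : dotv 0 u = 0.
Proof. by rewrite dotvC dotv0r. Qed.

Lemma dotv_sumr u (I : Type) (s : seq I) (f : I -> 'rV[R]_d) :
  dotv u (\sum_(k <- s) f k) = \sum_(k <- s) dotv u (f k).
Proof. by elim: s => [|k s IH]; rewrite ?big_nil ?dotv0r // !big_cons dotvDr IH. Qed.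

Lemma dotv_ge0 u : 0 <= dotv u u.
Proof. by apply: sumr_ge0 => i _; rewrite -expr2 sqr_ge0. Qed.

Lemma dotv_eq0 u : (dotv u u == 0) = (u == 0).
Proof.
apply/idP/idP => [/eqP u0|/eqP ->]; last by rewrite dotv0r.
apply/eqP/rowP => i; rewrite mxE; apply/eqP.
move/eqP: u0; rewrite /dotv psumr_eq0 => [/allP /(_ i)|j _];
  last by rewrite -expr2 sqr_ge0.
by rewrite mem_index_enum -expr2 sqrf_eq0; apply.
Qed.

Lemma dotv_gt0 u : (0 < dotv u u) = (u != 0).
Proof. by rewrite lt_neqAle eq_sym dotv_eq0 dotv_ge0 andbT. Qed.

Lemma enorm_ge0 u : 0 <= enorm u.
Proof. exact: sqrtr_ge0. Qed.

Lemma enorm_sqr u : enorm u ^+ 2 = dotv u u.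
Proof. by rewrite /enorm sqr_sqrtr // dotv_ge0. Qed.

Lemma enorm0 : enorm (0 : 'rV[R]_d) = 0.
Proof. by rewrite /enorm dotv0r sqrtr0. Qed.

Lemma enorm_gt0 u : (0 < enorm u) = (u != 0).
Proof. by rewrite sqrtr_gt0 dotv_gt0. Qed.

Lemma normr_coord_le_enorm u i : `|u 0 i| <= enorm u.
Proof.
rewrite -(ler_pXn2r (_ : 0 < 2)%N) ?nnegrE ?enorm_ge0 // enorm_sqr real_normK ?num_real //.
rewrite /dotv (bigD1 i) //= -expr2 lerDl.
by apply: sumr_ge0 => k _; rewrite -expr2 sqr_ge0.
Qed.

Lemma dotv_le_enormM u v : dotv u v <= enorm u * enorm v.
Proof.
have [->|u0] := eqVneq u 0; first by rewrite dotv0l mulr_ge0 ?enorm_ge0.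
set a := dotv u u; set b := dotv u v; set c := dotv v v.
have a0 : 0 < a by rewrite dotv_gt0.
(* Expanding [0 <= |a v - b u|^2] gives [0 <= a (a c - b^2)]. *)
have := dotv_ge0 (a *: v - b *: u).
rewrite dotvBl !dotvBr !dotvZl !dotvZr -/a -/c (dotvC v u) -/b => expand.
have b2_le : b ^+ 2 <= a * c.
  have : 0 <= a * (a * c - b ^+ 2) by nra.
  by rewrite pmulr_rge0 // subr_ge0.
have [b0|b0] := lerP 0 b; last by rewrite (le_trans (ltW b0)) ?mulr_ge0 ?enorm_ge0.
rewrite -(ler_pXn2r (_ : 0 < 2)%N) ?nnegrE ?mulr_ge0 ?enorm_ge0 //.
by rewrite exprMn !enorm_sqr.
Qed.

End DotProduct.

Definition quadform {R : realType} {n : nat} (C : 'M[R]_n) (u : 'rV[R]_n) : R :=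
  dotv u (u *m C).

Section Rayleigh.
Context {R : realType}.

Lemma continuous_sumr (T : topologicalType) (I : Type) (s : seq I) (F : I -> T -> R) :
  (forall i, continuous (F i)) -> continuous (fun v => \sum_(i <- s) F i v).
Proof.
move=> cF v; elim: s => [|i s IH].
  rewrite /continuous_at big_nil; under eq_fun do rewrite big_nil; exact: cvg_cst.
rewrite /continuous_at big_cons; under eq_fun do rewrite big_cons.
exact: cvgD (cF i v) IH.
Qed.

Lemma continuous_quadform n (C : 'M[R]_n) : continuous (quadform C).
Proof.
have coord i : continuous (fun v : 'rV[R]_n => v 0 i) by move=> v; exact: coord_continuous.
have -> : quadform C = fun v => \sum_j v 0 j * \sum_i v 0 i * C i j.
  by apply/funext => v; rewrite /quadform /dotv; under eq_bigr do rewrite mxE.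
apply: continuous_sumr => j v; apply: cvgM (coord j v) _.
apply: continuous_sumr => i {}v; apply: cvgM (coord i v) (cvg_cst _).
Qed.

Lemma quadformZ n (C : 'M[R]_n) a u : quadform C (a *: u) = a * a * quadform C u.
Proof. by rewrite /quadform -scalemxAl dotvZl dotvZr mulrA. Qed.

Lemma dotv_mulmx_sym n (C : 'M[R]_n) u w : C^T = C ->
  dotv u (w *m C) = dotv w (u *m C).
Proof.
move=> C_sym; have Cij i j : C i j = C j i by rewrite -{1}C_sym mxE.
rewrite /dotv; under eq_bigr do rewrite mxE mulr_sumr.
under [RHS]eq_bigr do rewrite mxE mulr_sumr.
by rewrite exchange_big; apply: eq_bigr => i _; apply: eq_bigr => j _; rewrite Cij mulrCA.
Qed.

(* Minimising [quadform C] over the compact unit sphere, then rescaling. *)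
Lemma exists_quadform_minimizer n (C : 'M[R]_n.+1) :
  exists2 c, dotv c c = 1 & forall v, quadform C c * dotv v v <= quadform C v.
Proof.
pose S := [set v : 'rV[R]_n.+1 | dotv v v = 1].
have S_closed : closed S.
  have -> : S = quadform 1%:M @^-1` [set 1].
    by apply/seteqP; split => v; rewrite /= /quadform mulmx1.
  by apply: preimage_closed; [move=> v _; exact: continuous_quadform | exact: closed_eq].
have S_compact : compact S.
  have B := @rV_compact R n.+1 (fun=> `[-1, 1]%classic) (fun=> @segment_compact R (-1) 1).
  apply: (subclosed_compact S_closed B) => v Sv i /=.
  rewrite in_itv /= -ler_norml (le_trans (normr_coord_le_enorm _ _)) //.
  by rewrite /enorm Sv sqrtr1.
have S0 : S !=set0.
  exists (\row_i (i == ord0)%:R); rewrite /S /= /dotv (bigD1 ord0) //= !mxE eqxx mulr1.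
  by rewrite big1 ?addr0 // => i /negbTE i0; rewrite !mxE i0 mulr0.
have [c /set_mem Sc c_min] :=
  EVT_min_rV S0 S_compact (continuous_subspaceT (@continuous_quadform _ C)).
exists c => // v; have [->|v0] := eqVneq v 0.
  by rewrite /quadform dotv0r mulr0 mul0mx dotv0r.
have s0 : 0 < enorm v by rewrite enorm_gt0.
have Sv : S ((enorm v)^-1 *: v).
  by rewrite /S /= dotvZl dotvZr -enorm_sqr; field; exact: lt0r_neq0.
have := c_min _ (mem_set Sv); rewrite quadformZ -enorm_sqr => vmin.
have -> : quadform C v = (enorm v)^-1 * (enorm v)^-1 * quadform C v * enorm v ^+ 2.
  by field; rewrite lt0r_neq0.
by rewrite ler_pM2r ?exprn_gt0.
Qed.

Lemma linear_coef_eq0 (b p : R) : 0 <= p ->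
  (forall t, 0 <= 2 * t * b + t * t * p) -> b = 0.
Proof.
move=> p0 nonneg; pose e := (p + 1)^-1.
have e0 : 0 < e by rewrite invr_gt0; lra.
have ep : e * p < 1 by rewrite /e mulrC ltr_pdivrMr ?mul1r; lra.
have := nonneg (- e * b).
rewrite (_ : _ + _ = e * (b * b) * (e * p - 2)); last by ring.
rewrite nmulr_lge0; last lra.
rewrite pmulr_rle0 // => bb.
by apply/eqP; rewrite -sqrf_eq0 eq_le expr2 bb -expr2 sqr_ge0.
Qed.

Lemma quadform_minimizer_eigen n (C : 'M[R]_n) c : C^T = C -> dotv c c = 1 ->
  (forall v, quadform C c * dotv v v <= quadform C v) ->
  c *m C = quadform C c *: c.
Proof.
move=> C_sym cc c_min; set m := quadform C c.
(* [quadform C - m |.|^2] is nonnegative and vanishes at [c], so its first variation at [c]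
   vanishes. *)
have variation w : dotv w (c *m C) - m * dotv w c = 0.
  apply: (@linear_coef_eq0 _ (quadform C w - m * dotv w w)); first by rewrite subr_ge0.
  move=> t; have := c_min (c + t *: w); rewrite -subr_ge0.
  suff -> : quadform C (c + t *: w) - m * dotv (c + t *: w) (c + t *: w) =
      2 * t * (dotv w (c *m C) - m * dotv w c) + t * t * (quadform C w - m * dotv w w) by [].
  rewrite /quadform mulmxDl -scalemxAl !(dotvDl, dotvDr, dotvZl, dotvZr).
  by rewrite (dotv_mulmx_sym c w C_sym) (dotvC c w) cc /m /quadform; ring.
apply/eqP; rewrite -subr_eq0 -dotv_eq0; apply/eqP.
by rewrite -[RHS](variation (c *m C - m *: c)) dotvBr dotvZr.
Qed.

Lemma lambda_min_le_quadform n (C : 'M[R]_n) u : C^T = C ->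
  lambda_min C * dotv u u <= quadform C u.
Proof.
case: n C u => [|n] C u C_sym.
  by rewrite /quadform /dotv !big_ord0 mulr0.
have [c cc c_min] := exists_quadform_minimizer C.
suff -> : lambda_min C = quadform C c by [].
have eig_c : eigenvalue C (quadform C c).
  apply/eigenvalueP; exists c; first exact: quadform_minimizer_eigen.
  by rewrite -dotv_eq0 cc oner_neq0.
have lb : lbound [set a | eigenvalue C a] (quadform C c).
  move=> a /eigenvalueP [v vC v0]; have := c_min v.
  by rewrite /quadform vC dotvZr ler_pM2r ?dotv_gt0.
apply/le_anti/andP; split; first by apply: ge_inf eig_c; exists (quadform C c).
by apply: lb_le_inf => //; exists (quadform C c).
Qed.
End Rayleigh.

Section BoundedIntegrals.
Context {R : realType} {dT : measure_display} {T : measurableType dT}.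
Variable m0 : {measure set T -> \bar R}.
Implicit Types (D : set T) (f t F : T -> R).

Lemma integrable_density D f : measurable D -> measurable_fun D f ->
  (forall x, D x -> 0 <= f x) -> (\int[m0]_(x in D) (f x)%:E = 1)%E ->
  m0.-integrable D (EFin \o f).
Proof.
move=> mD mf f0 f1; apply/integrableP; split; first exact/measurable_EFinP.
rewrite (eq_integral (fun x => (f x)%:E)) ?f1 ?ltry // => x /set_mem Dx.
by rewrite /= ger0_norm ?f0.
Qed.

Lemma integrableZl_EFin D f c : measurable D -> m0.-integrable D (EFin \o f) ->
  m0.-integrable D (EFin \o (fun x => c * f x)).
Proof.
move=> mD fi; apply: (eq_integrable mD _ _ _ (integrableZl mD c fi)).
by move=> x _; rewrite /= EFinM.
Qed.

Lemma integrable_mulr_bounded D t F M : measurable D ->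
  measurable_fun D t -> measurable_fun D F -> m0.-integrable D (EFin \o t) ->
  (forall x, D x -> 0 <= t x) -> (forall x, D x -> `|F x| <= M) ->
  m0.-integrable D (EFin \o (fun x => t x * F x)).
Proof.
move=> mD mt mF ti t0 FM.
apply: (@le_integrable _ _ _ _ _ mD _ (EFin \o (fun x => M * t x))).
- by apply/measurable_EFinP; exact: measurable_funM.
- move=> x Dx /=; rewrite lee_fin.
  have M0 : 0 <= M by apply: le_trans (FM _ Dx).
  by rewrite !normrM (ger0_norm M0) (ger0_norm (t0 _ Dx)) mulrC ler_wpM2r ?t0 ?FM.
- exact: integrableZl_EFin.
Qed.

Lemma normr_Rintegral_mulr_bounded D t F M : measurable D ->
  measurable_fun D t -> measurable_fun D F -> m0.-integrable D (EFin \o t) ->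
  (forall x, D x -> 0 <= t x) -> (forall x, D x -> `|F x| <= M) ->
  `|Rintegral m0 D (fun x => t x * F x)| <= M * Rintegral m0 D t.
Proof.
move=> mD mt mF ti t0 FM.
apply: le_trans (le_normr_Rintegral mD (integrable_mulr_bounded mD mt mF ti t0 FM)) _.
rewrite -RintegralZl //; apply: le_Rintegral => //.
- have absFM x : D x -> `| `|F x| | <= M by move=> Dx; rewrite normr_id FM.
  have mabsF : measurable_fun D (fun x => `|F x|) by apply: measurableT_comp.
  apply: (eq_integrable mD _ _ _ (integrable_mulr_bounded mD mt mabsF ti t0 absFM)).
  by move=> x /set_mem Dx /=; rewrite normrM (ger0_norm (t0 _ Dx)).
- exact: integrableZl_EFin.
- by move=> x Dx; rewrite normrM (ger0_norm (t0 _ Dx)) mulrC ler_wpM2r ?t0 ?FM.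
Qed.

Lemma Rintegral_sum (I : Type) (s : seq I) D (f : I -> T -> R) : measurable D ->
  (forall i, m0.-integrable D (EFin \o f i)) ->
  Rintegral m0 D (fun x => \sum_(i <- s) f i x) = \sum_(i <- s) Rintegral m0 D (f i).
Proof.
move=> mD fi; elim: s => [|i s IH].
  by under eq_fun do rewrite big_nil; rewrite big_nil Rintegral_cst // mul0r.
have tail_int : m0.-integrable D (EFin \o (fun x => \sum_(j <- s) f j x)).
  have sum_int := @integrable_sum _ _ _ _ _ mD _ s xpredT (fun j => EFin \o f j) (fun j _ => fi j).
  apply: (eq_integrable mD _ _ _ sum_int).
  by move=> x _; rewrite /= sumEFin.
under eq_fun do rewrite big_cons.
by rewrite big_cons RintegralD // IH.
Qed.

End BoundedIntegrals.

Section RowSpan.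
Context {R : realType} {n : nat}.

Lemma exists_spanning_rows (S : set 'rV[R]_n) :
  exists m (B : 'M[R]_(m, n)), (forall j, S (row j B)) /\ forall v, S v -> (v <= B)%MS.
Proof.
pose P r := exists m (B : 'M[R]_(m, n)), (forall j, S (row j B)) /\ \rank B = r.
have exP : exists r, `[< P r >].
  by exists 0%N; apply/asboolP; exists 0%N, 0; split; [case | rewrite mxrank0].
have ubP r : `[< P r >] -> (r <= n)%N by move=> /asboolP [m [B [_ <-]]]; exact: rank_leq_col.
(* A family of rows of [S] of maximal rank spans [S]. *)
case: (ex_maxnP exP ubP) => r /asboolP [m [B [SB rB]]] r_max.
exists m, B; split => // v Sv.
have P_Bv : `[< P (\rank (col_mx B v)) >].
  apply/asboolP; exists (m + 1)%N, (col_mx B v); split => // j.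
  rewrite -(splitK j); case: (fintype.split j) => k /=; first by rewrite rowKu.
  by rewrite rowKd (ord1 k) (_ : row 0 v = v) //; apply/rowP => i; rewrite mxE.
have [_] := mxrank_leqif_sup (addsmxSl B v).
rewrite addsmxE rB eqn_leq r_max // -rB -addsmxE mxrankS ?addsmxSl //= => /esym eqBv.
exact: submx_trans (addsmxSr B v) eqBv.
Qed.

Lemma dotv_representation (S : set 'rV[R]_n) (I : 'rV[R]_n -> R) :
  (forall m (B : 'M[R]_(m, n)) (c : 'rV[R]_m), (forall j, S (row j B)) ->
     I (c *m B) = \sum_j c 0 j * I (row j B)) ->
  exists w, forall v, S v -> I v = dotv v w.
Proof.
move=> I_lin; have [m [B [SB spanB]]] := exists_spanning_rows S.
pose iv : 'cV[R]_m := \col_j I (row j B).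
exists (pinvmx B *m iv)^T => v Sv.
rewrite -{1}(mulmxKpV (spanB v Sv)) I_lin //.
rewrite /dotv; under [RHS]eq_bigr do rewrite mxE.
transitivity (((v *m pinvmx B) *m iv) 0 0).
  by rewrite mxE; apply: eq_bigr => j _; rewrite [iv j 0]mxE.
by rewrite -mulmxA mxE.
Qed.

End RowSpan.

Lemma measurable_dotv_const {R : realType} {dT : measure_display} {T : measurableType dT}
    {n : nat} (D : set T) (f : T -> 'rV[R]_n) (v : 'rV[R]_n) :
  (forall i, measurable_fun D (fun x => f x 0 i)) ->
  measurable_fun D (fun x => dotv (f x) v).
Proof.
move=> fm; apply: measurable_sum => i.
by apply: measurable_funM => //; exact: measurable_cst.
Qed.

Section Occupancy.
Context {R : realType} {dT : measure_display} {T : measurableType dT}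
        {A : finType} {d : nat}.
Variables (rho : probability T R) (nu : {measure set T -> \bar R}) (X : nat -> set T)
          (mu : nat -> T -> 'rV[R]_d) (phi : nat -> T -> A -> 'rV[R]_d) (H : nat).
Hypothesis HXm : forall h, (1 <= h <= H)%N -> measurable (X h).
Hypothesis Hrho : rho (X 1) = 1%E.
Hypothesis Hphim : forall h a (i : 'I_d), (1 <= h <= H - 1)%N ->
  measurable_fun (X h) (fun x => phi h x a 0 i).
Hypothesis Hmum : forall h (i : 'I_d), (2 <= h <= H)%N ->
  measurable_fun (X h) (fun x => mu h x 0 i).
Hypothesis Hdens_pos : forall h x a x', (1 <= h <= H - 1)%N -> X h x -> X h.+1 x' ->
  0 <= trans mu phi h x a x'.
Hypothesis Hdens_int : forall h x a, (1 <= h <= H - 1)%N -> X h x ->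
  (\int[nu]_(x' in X h.+1) (trans mu phi h x a x')%:E = 1)%E.
Variable pi : T -> A -> R.
Hypothesis pi_policy : is_policy pi.

Local Notation E := (Eocc rho nu X mu phi pi).

(* [E j] integrates over the layer [X j.+1]. *)
Definition regular j (g : T -> A -> R) :=
  (forall a, measurable_fun (X j.+1) (fun x => g x a)) /\
  (exists M, forall x a, X j.+1 x -> `|g x a| <= M).

Definition pavg (g : T -> A -> R) x := \sum_(a : A) pi x a * g x a.

Definition next_exp j (g : T -> A -> R) x a :=
  Rintegral nu (X j.+2) (fun x' => trans mu phi j.+1 x a x' * pavg g x').

Lemma EoccS j g : E j.+1 g = E j (next_exp j g).
Proof. by []. Qed.

Lemma Eocc_ext j g1 g2 : (forall x a, X j.+1 x -> g1 x a = g2 x a) -> E j g1 = E j g2.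
Proof.
elim: j g1 g2 => [|j IH] g1 g2 eqg /=.
  by apply: eq_Rintegral => x /set_mem Xx; apply: eq_bigr => a _; rewrite eqg.
apply: IH => x a _; apply: eq_Rintegral => y /set_mem Xy.
by congr (_ * _); apply: eq_bigr => b _; rewrite eqg.
Qed.

Lemma pi_ge0 x a : 0 <= pi x a. Proof. by case: pi_policy. Qed.

Lemma measurable_pavg j g : regular j g -> measurable_fun (X j.+1) (pavg g).
Proof.
case: pi_policy => _ _ pim [gm _]; apply: measurable_sum => a.
by apply: measurable_funM; [exact: measurable_funS (pim a) | exact: gm].
Qed.

Lemma normr_pavg_le (D : set T) g M : (forall x a, D x -> `|g x a| <= M) ->
  forall x, D x -> `|pavg g x| <= M.
Proof.
move=> gM x Dx; apply: le_trans (ler_norm_sum _ _ _) _.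
apply: le_trans (_ : \sum_(a : A) pi x a * M <= M).
  apply: ler_sum => a _; rewrite normrM ger0_norm ?pi_ge0 //.
  by rewrite ler_wpM2l ?pi_ge0 ?gM.
by case: pi_policy => _ pi1 _; rewrite -mulr_suml pi1 mul1r.
Qed.

Lemma pavg_lin g1 g2 (c1 c2 : R) x :
  pavg (fun x a => c1 * g1 x a + c2 * g2 x a) x = c1 * pavg g1 x + c2 * pavg g2 x.
Proof. by rewrite /pavg !mulr_sumr -big_split; apply: eq_bigr => a _ /=; ring. Qed.

Lemma pavg_ge0 (D : set T) g : (forall x a, D x -> 0 <= g x a) ->
  forall x, D x -> 0 <= pavg g x.
Proof. by move=> g0 x Dx; apply: sumr_ge0 => a _; rewrite mulr_ge0 ?pi_ge0 ?g0. Qed.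

Lemma pavg1 x : pavg (fun _ _ => 1) x = 1.
Proof. by case: pi_policy => _ pi1 _; rewrite /pavg; under eq_bigr do rewrite mulr1. Qed.

Section Layer.
Variable j : nat.
Hypothesis hj : (j.+1 <= H - 1)%N.

Let hj1 : (1 <= j.+1 <= H - 1)%N. Proof. by rewrite hj. Qed.
Let hj2 : (2 <= j.+2 <= H)%N.
Proof. by move: hj; case: H => //= H'; rewrite subn1. Qed.
Let mX1 : measurable (X j.+1).
Proof. by apply: HXm; rewrite /= (leq_trans hj) ?leq_subr. Qed.
Let mX2 : measurable (X j.+2).
Proof. by apply: HXm; case/andP: hj2 => _ ->; rewrite andbT. Qed.

Lemma measurable_trans x a : measurable_fun (X j.+2) (trans mu phi j.+1 x a).
Proof. by apply: measurable_dotv_const => i; apply: Hmum. Qed.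

Lemma integrable_trans x a : X j.+1 x ->
  nu.-integrable (X j.+2) (EFin \o trans mu phi j.+1 x a).
Proof.
move=> Xx; apply: integrable_density => //; first exact: measurable_trans.
  by move=> y Xy; apply: Hdens_pos.
exact: Hdens_int.
Qed.

Lemma Rintegral_trans x a : X j.+1 x ->
  Rintegral nu (X j.+2) (trans mu phi j.+1 x a) = 1.
Proof. by move=> Xx; rewrite /Rintegral Hdens_int. Qed.

Lemma integrable_next_exp_integrand g x a : regular j.+1 g -> X j.+1 x ->
  nu.-integrable (X j.+2) (EFin \o (fun x' => trans mu phi j.+1 x a x' * pavg g x')).
Proof.
move=> G Xx; case: (G) => _ [M gM].
exact: integrable_mulr_bounded mX2 (measurable_trans x a) (measurable_pavg G)
  (integrable_trans a Xx) (fun y Xy => Hdens_pos a hj1 Xx Xy) (normr_pavg_le gM).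
Qed.

Lemma normr_next_exp_le g M x a : regular j.+1 g ->
  (forall x a, X j.+2 x -> `|g x a| <= M) -> X j.+1 x -> `|next_exp j g x a| <= M.
Proof.
move=> G gM Xx; rewrite -[M]mulr1 -(Rintegral_trans a Xx).
exact: normr_Rintegral_mulr_bounded mX2 (measurable_trans x a) (measurable_pavg G)
  (integrable_trans a Xx) (fun y Xy => Hdens_pos a hj1 Xx Xy) (normr_pavg_le gM).
Qed.

Lemma next_exp_lin g1 g2 (c1 c2 : R) x a : regular j.+1 g1 -> regular j.+1 g2 ->
  X j.+1 x -> next_exp j (fun x a => c1 * g1 x a + c2 * g2 x a) x a =
  c1 * next_exp j g1 x a + c2 * next_exp j g2 x a.
Proof.
move=> G1 G2 Xx; rewrite /next_exp.
under eq_Rintegral do rewrite pavg_lin mulrDr (mulrCA _ c1) (mulrCA _ c2).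
have I1 := integrable_next_exp_integrand a G1 Xx.
have I2 := integrable_next_exp_integrand a G2 Xx.
by rewrite RintegralD ?RintegralZl //; exact: integrableZl_EFin.
Qed.

Lemma next_exp_ge0 g x a : (forall x a, X j.+2 x -> 0 <= g x a) -> X j.+1 x ->
  0 <= next_exp j g x a.
Proof.
move=> g0 Xx; apply: Rintegral_ge0 => y Xy.
by rewrite mulr_ge0 ?(Hdens_pos a hj1 Xx Xy) ?(pavg_ge0 g0).
Qed.

Lemma next_exp1 x a : X j.+1 x -> next_exp j (fun _ _ => 1) x a = 1.
Proof.
by move=> Xx; rewrite /next_exp; under eq_Rintegral do rewrite pavg1 mulr1; exact: Rintegral_trans.
Qed.

(* On the features [phi j.+1 x a], [next_exp j g x a] is a linear function of the feature, hence
   a dot product with a fixed vector; this needs no integrability of [mu] itself. *)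
Lemma measurable_next_exp g a : regular j.+1 g ->
  measurable_fun (X j.+1) (fun x => next_exp j g x a).
Proof.
move=> G.
pose S := [set v | exists2 y, X j.+1 y & v = phi j.+1 y a].
pose I v := Rintegral nu (X j.+2) (fun x' => dotv (mu j.+2 x') v * pavg g x').
have intS v : S v -> nu.-integrable (X j.+2)
    (EFin \o (fun x' => dotv (mu j.+2 x') v * pavg g x')).
  by move=> [y Xy ->]; exact: integrable_next_exp_integrand a G Xy.
have [w Iw] : exists w, forall v, S v -> I v = dotv v w.
  apply: dotv_representation => m B c SB; rewrite /I.
  have split_row x' : dotv (mu j.+2 x') (c *m B) * pavg g x' =
      \sum_k c 0 k * (dotv (mu j.+2 x') (row k B) * pavg g x').
    rewrite mulmx_sum_row dotv_sumr mulr_suml; apply: eq_bigr => k _.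
    by rewrite dotvZr mulrA.
  under eq_Rintegral do rewrite split_row.
  rewrite Rintegral_sum //; last by move=> k; exact: integrableZl_EFin (intS _ (SB k)).
  by apply: eq_bigr => k _; rewrite RintegralZl //; exact: intS.
apply: (eq_measurable_fun (fun x => dotv (phi j.+1 x a) w)).
  by move=> x /set_mem Xx; rewrite -Iw //; exists x.
by apply: measurable_dotv_const => i; apply: Hphim.
Qed.

Lemma regular_next_exp g : regular j.+1 g -> regular j (next_exp j g).
Proof.
move=> G; split; first by move=> a; exact: measurable_next_exp.
by case: (G) => _ [M gM]; exists M => x a Xx; exact: normr_next_exp_le.
Qed.

End Layer.

Lemma integrable_pavg_rho g : measurable (X 1) -> regular 0 g ->
  rho.-integrable (X 1) (EFin \o pavg g).
Proof.
move=> mX G; case: (G) => _ [M gM].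
apply: (@le_integrable _ _ _ _ _ mX _ (EFin \o cst M)).
- exact/measurable_EFinP/(measurable_pavg G).
- by move=> x Xx /=; rewrite lee_fin (le_trans (normr_pavg_le gM Xx)) // ler_norm.
- exact: finite_measure_integrable_cst.
Qed.

Let mX1 j : (j.+1 <= H - 1)%N -> measurable (X 1).
Proof. by move=> hj; apply: HXm; rewrite /= (leq_trans _ (leq_subr 1 H)) // (leq_trans _ hj). Qed.

Lemma Eocc_lin j g1 g2 (c1 c2 : R) : (j.+1 <= H - 1)%N -> regular j g1 -> regular j g2 ->
  E j (fun x a => c1 * g1 x a + c2 * g2 x a) = c1 * E j g1 + c2 * E j g2.
Proof.
elim: j g1 g2 => [|j IH] g1 g2 hj G1 G2.
  have mX := mX1 hj.
  rewrite /= (eq_Rintegral _ (fun x _ => pavg_lin g1 g2 c1 c2 x)).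
  have I1 := integrable_pavg_rho mX G1; have I2 := integrable_pavg_rho mX G2.
  by rewrite RintegralD ?RintegralZl //; exact: integrableZl_EFin.
rewrite !EoccS (@Eocc_ext j _ (fun x a => c1 * next_exp j g1 x a + c2 * next_exp j g2 x a)).
  by rewrite IH ?(ltnW hj) //; [exact: (regular_next_exp (ltnW hj) G1) |
    exact: (regular_next_exp (ltnW hj) G2)].
by move=> x a Xx; rewrite (next_exp_lin (ltnW hj)).
Qed.

Lemma Eocc_ge0 j g : (j.+1 <= H - 1)%N -> regular j g ->
  (forall x a, X j.+1 x -> 0 <= g x a) -> 0 <= E j g.
Proof.
elim: j g => [|j IH] g hj G g0; first by apply: Rintegral_ge0; exact: pavg_ge0.
rewrite EoccS; apply: IH (ltnW hj) (regular_next_exp (ltnW hj) G) _.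
by move=> x a Xx; exact: (next_exp_ge0 (ltnW hj)).
Qed.

Lemma Eocc1 j : (j.+1 <= H - 1)%N -> E j (fun _ _ => 1) = 1.
Proof.
elim: j => [|j IH] hj.
  have mX := mX1 hj.
  by rewrite /= (eq_Rintegral _ (fun x _ => pavg1 x)) Rintegral_cst // mul1r (congr1 fine Hrho).
rewrite EoccS (@Eocc_ext j _ (fun _ _ => 1)) ?IH ?(ltnW hj) //.
by move=> x a Xx; rewrite (next_exp1 (ltnW hj)).
Qed.


Lemma regular_cst j (c : R) : regular j (fun _ _ => c).
Proof. by split; [move=> a; exact: measurable_cst | exists `|c|]. Qed.

Lemma regular_lin j g1 g2 (c1 c2 : R) : regular j g1 -> regular j g2 ->
  regular j (fun x a => c1 * g1 x a + c2 * g2 x a).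
Proof.
move=> [m1 [M1 b1]] [m2 [M2 b2]]; split.
  by move=> a; apply: measurable_funD; apply: measurable_funM => //; exact: measurable_cst.
exists (`|c1| * M1 + `|c2| * M2) => x a Xx.
apply: le_trans (ler_normD _ _) _; rewrite !normrM.
by apply: lerD; apply: ler_wpM2l => //; [exact: b1 | exact: b2].
Qed.

Lemma regular_mul j g1 g2 : regular j g1 -> regular j g2 ->
  regular j (fun x a => g1 x a * g2 x a).
Proof.
move=> [m1 [M1 b1]] [m2 [M2 b2]]; split; first by move=> a; exact: measurable_funM.
exists (M1 * M2) => x a Xx; rewrite normrM.
by apply: ler_pM => //; [exact: b1 | exact: b2].
Qed.

Lemma regular_sum j (I : Type) (s : seq I) (c : I -> R) (g : I -> T -> A -> R) :
  (forall i, regular j (g i)) -> regular j (fun x a => \sum_(i <- s) c i * g i x a).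
Proof.
move=> G; elim: s => [|i s IH].
  by under eq_fun do under eq_fun do rewrite big_nil; exact: regular_cst.
under eq_fun do under eq_fun do rewrite big_cons -[X in _ + X]mul1r.
exact: regular_lin.
Qed.

Lemma Eocc_sum j (I : Type) (s : seq I) (c : I -> R) (g : I -> T -> A -> R) :
  (j.+1 <= H - 1)%N -> (forall i, regular j (g i)) ->
  E j (fun x a => \sum_(i <- s) c i * g i x a) = \sum_(i <- s) c i * E j (g i).
Proof.
move=> hj G; elim: s => [|i s IH].
  under eq_fun do under eq_fun do rewrite big_nil.
  have := Eocc_lin 0 0 hj (regular_cst j 0) (regular_cst j 0).
  by rewrite !mul0r addr0 big_nil.
under eq_fun do under eq_fun do rewrite big_cons -[X in _ + X]mul1r.
by rewrite Eocc_lin ?IH ?big_cons ?mul1r //; exact: regular_sum.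
Qed.

Lemma Eocc_le j g M : (j.+1 <= H - 1)%N -> regular j g ->
  (forall x a, X j.+1 x -> g x a <= M) -> E j g <= M.
Proof.
move=> hj G gM; have := Eocc_ge0 hj (regular_lin M (-1) (regular_cst j 1) G).
rewrite (Eocc_lin _ _ hj (regular_cst j 1) G) (Eocc1 hj) mulr1 mulN1r subr_ge0; apply.
by move=> x a Xx; rewrite mulN1r subr_ge0 gM.
Qed.

Lemma Eocc_sqr_le j g M : (j.+1 <= H - 1)%N -> regular j g ->
  (forall x a, X j.+1 x -> 0 <= g x a <= M) -> E j (fun x a => g x a ^+ 2) <= M * E j g.
Proof.
move=> hj G gM; have G2 := regular_mul G G.
rewrite (@Eocc_ext j _ (fun x a => g x a * g x a)); last by move=> x a _; rewrite expr2.
have := Eocc_ge0 hj (regular_lin M (-1) G G2).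
rewrite (Eocc_lin _ _ hj G G2) mulN1r subr_ge0; apply.
move=> x a Xx; have /andP[g0 gle] := gM x a Xx.
by rewrite mulN1r subr_ge0 ler_wpM2r.
Qed.

Hypothesis Hphin : forall h x a, (1 <= h <= H - 1)%N -> X h x -> enorm (phi h x a) <= 1.

Lemma covmat_sym h : (covmat rho nu X mu phi pi h)^T = covmat rho nu X mu phi pi h.
Proof.
apply/matrixP => i l; rewrite !mxE; congr (Eocc _ _ _ _ _ _ _ _).
by apply/funext => y; apply/funext => a; rewrite mulrC.
Qed.

Section Features.
Variable j : nat.
Hypothesis hj : (j.+1 <= H - 1)%N.

Let hj1 : (1 <= j.+1 <= H - 1)%N. Proof. by rewrite hj. Qed.

Lemma regular_phi_coord (i : 'I_d) : regular j (fun y a => phi j.+1 y a 0 i).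
Proof.
split; first by move=> a; exact: Hphim.
by exists 1 => y a Xy; apply: le_trans (normr_coord_le_enorm _ _) (Hphin _ hj1 Xy).
Qed.

Lemma Eocc_dotv_phi (u : 'rV[R]_d) :
  E j (fun y a => dotv u (phi j.+1 y a)) = dotv u (featmean rho nu X mu phi pi j.+1).
Proof.
rewrite Eocc_sum //; last exact: regular_phi_coord.
by apply: eq_bigr => i _; rewrite mxE.
Qed.

Lemma quadform_covmat (u : 'rV[R]_d) : quadform (covmat rho nu X mu phi pi j.+1) u =
  E j (fun y a => dotv u (phi j.+1 y a) ^+ 2).
Proof.
pose f i y a := phi j.+1 y a 0 i.
have Gff i l : regular j (fun y a => f i y a * f l y a).
  exact: regular_mul (regular_phi_coord _) (regular_phi_coord _).
transitivity (\sum_l u 0 l * E j (fun y a => \sum_i u 0 i * (f i y a * f l y a))).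
  rewrite /quadform /dotv; apply: eq_bigr => l _; rewrite mxE Eocc_sum //.
  by congr (_ * _); apply: eq_bigr => i _; rewrite mxE.
rewrite -Eocc_sum //; last by move=> l; exact: regular_sum.
congr (Eocc _ _ _ _ _ _ _ _); apply/funext => y; apply/funext => a.
rewrite expr2 /dotv mulr_suml; apply: eq_bigr => l _.
rewrite mulr_sumr [RHS]mulr_sumr; apply: eq_bigr => i _; rewrite /f; ring.
Qed.

End Features.

Lemma dpi_bounds j x : (j.+1 <= H - 1)%N -> X j.+2 x ->
  lambda_min (covmat rho nu X mu phi pi j.+1) * enorm (mu j.+2 x) <=
    dpi rho nu X mu phi pi j.+2 x <= enorm (mu j.+2 x).
Proof.
move=> hj Xx; set u := mu j.+2 x; set g := fun y a => dotv u (phi j.+1 y a).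
have hj1 : (1 <= j.+1 <= H - 1)%N by rewrite hj.
have G : regular j g.
  by rewrite /g; under eq_fun do under eq_fun do rewrite /dotv;
    apply: regular_sum => i; exact: regular_phi_coord.
have g_range y a : X j.+1 y -> 0 <= g y a <= enorm u.
  move=> Xy; rewrite (Hdens_pos a hj1 Xy Xx) /=.
  apply: le_trans (dotv_le_enormM u (phi j.+1 y a)) _.
  by rewrite ler_piMr ?enorm_ge0 ?Hphin.
have dpiE : dpi rho nu X mu phi pi j.+2 x = E j g by rewrite Eocc_dotv_phi.
rewrite dpiE (@Eocc_le j g (enorm u) hj G) ?andbT;
  last by move=> y a Xy; case/andP: (g_range y a Xy).
have [u0|u0] := eqVneq u 0.
  by rewrite u0 enorm0 mulr0 Eocc_ge0 // => y a Xy; case/andP: (g_range y a Xy).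
rewrite -(ler_pM2l (_ : 0 < enorm u)) ?enorm_gt0 // mulrCA -expr2 enorm_sqr.
apply: le_trans (lambda_min_le_quadform u (covmat_sym j.+1)) _.
by rewrite quadform_covmat //; exact: Eocc_sqr_le.
Qed.

End Occupancy.

Lemma half_powR_lt {R : realType} (e : R) : 0 < e <= 1 -> (e / 2) `^ (3 / 2) < e.
Proof.
move=> /andP[e0 e1]; apply: le_lt_trans (_ : e / 2 < e); last lra.
by apply: ge1r_powR; [apply/andP; split; lra | lra].
Qed.

Unset Implicit Arguments.
Theorem mainTheorem8
  (R : realType) (H d : nat) (A : finType)
  (dT : measure_display) (T : measurableType dT)
  (nu : {measure set T -> \bar R}) (X : nat -> set T)
  (rho : probability T R)
  (mu : nat -> T -> 'rV[R]_d) (phi : nat -> T -> A -> 'rV[R]_d)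
  (eta : R)
  (* state space: sigma-finite measure, disjoint measurable layers X_1..X_H *)
  (Hnu : sigma_finite setT nu)
  (HXm : forall h, (1 <= h <= H)%N -> measurable (X h))
  (HXdisj : forall h h', (1 <= h <= H)%N -> (1 <= h' <= H)%N -> h <> h' ->
              X h `&` X h' = set0)
  (HXcov : forall x : T, exists2 h, (1 <= h <= H)%N & X h x)
  (* initial distribution on X_1 *)
  (Hrho : rho (X 1) = 1%E)
  (* measurability of the features *)
  (Hphim : forall h a (i : 'I_d), (1 <= h <= H - 1)%N ->
             measurable_fun (X h) (fun x => phi h x a 0 i))
  (Hmum : forall h (i : 'I_d), (2 <= h <= H)%N ->
             measurable_fun (X h) (fun x => mu h x 0 i))
  (* x' |-> mu_{h+1}(x')^T phi_h(x,a) is a probability density on X_{h+1} *)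
  (Hdens_pos : forall h x a x', (1 <= h <= H - 1)%N -> X h x -> X h.+1 x' ->
             0 <= trans mu phi h x a x')
  (Hdens_int : forall h x a, (1 <= h <= H - 1)%N -> X h x ->
             (\int[nu]_(x' in X h.+1) (trans mu phi h x a x')%:E = 1)%E)
  (* normalization ||phi_h(x,a)|| <= 1 *)
  (Hphin : forall h x a, (1 <= h <= H - 1)%N -> X h x -> enorm (phi h x a) <= 1)
  (* eta-feature coverage *)
  (Heta : 0 < eta)
  (Hcov : forall h, (1 <= h <= H - 1)%N ->
     (ereal_sup [set (lambda_min (covmat rho nu X mu phi pi h))%:E
                 | pi in is_policy] >= eta%:E)%E) :
  (* (eta/2)^{3/2}-reachability *)
  forall h x, (2 <= h <= H)%N -> X h x ->
    (ereal_sup [set (dpi rho nu X mu phi pi h x)%:E | pi in is_policy]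
       >= (((eta / 2) `^ (3 / 2)) * enorm (mu h x))%:E)%E.
Proof.
move=> h x /andP[h2 hH] Xx.
case: h h2 hH Xx => [|[|j]] // _ hH Xx.
have hj : (1 <= j.+1 <= H - 1)%N by rewrite /= ltn_subRL add1n.
have bounds pi (pol : is_policy pi) :=
  dpi_bounds HXm Hrho Hphim Hmum Hdens_pos Hdens_int pol Hphin hj Xx.
set u := mu j.+2 x.
set L := [set (lambda_min (covmat rho nu X mu phi pi j.+1))%:E | pi in is_policy].
have etaL : (eta%:E <= ereal_sup L)%E := Hcov _ hj.
have dpi_le_sup pi : is_policy pi ->
    ((dpi rho nu X mu phi pi j.+2 x)%:E <= ereal_sup
      [set (dpi rho nu X mu phi pi j.+2 x)%:E | pi in is_policy])%E.
  by move=> pol; apply: ereal_sup_ubound; exists pi.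
have [u0|u0] := eqVneq u 0.
  have [pi0 pol0] : exists pi : T -> A -> R, is_policy pi.
    apply: contrapT => no_pi; move: etaL; rewrite (_ : L = set0) ?ereal_sup0 ?leNgt ?ltNye //.
    by apply/seteqP; split => // y [pi pol _]; apply: no_pi; exists pi.
  by apply: le_trans (dpi_le_sup _ pol0); rewrite lee_fin /dpi -/u u0 dotv0l enorm0 mulr0.
have eta_le1 : eta <= 1.
  rewrite -lee_fin; apply: le_trans etaL _; apply: ge_ereal_sup => _ [pi pol <-].
  have /andP[lo hi] := bounds pi pol.
  by rewrite lee_fin -(ler_pM2r (_ : 0 < enorm u)) ?enorm_gt0 // mul1r (le_trans lo).
have /ereal_sup_gt [_ [pi pol <-]] : (((eta / 2) `^ (3 / 2))%:E < ereal_sup L)%E.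
  by apply: lt_le_trans etaL; rewrite lte_fin half_powR_lt // Heta.
rewrite lte_fin => c_lt; apply: le_trans (dpi_le_sup _ pol); rewrite lee_fin.
have /andP[lo _] := bounds pi pol.
by apply: le_trans lo; rewrite ler_pM2r ?enorm_gt0 // ltW.
Qed.
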